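(* Under Assumptions (A1), (A2) and (A4) of the context, for every $\zeta>0$ there exist $M\in\mathbb N_+$ and $\lambda>0$ such that $$\|z\|_{\mathrm D(A)}^2+2\lambda\|\mathfrak d(z)\|^2_{\mathbb R^{M_\sigma}}\ge\zeta\|z\|_V^2\qquad\text{for all }z\in\mathrm D(A).$$ Moreover $M$ can be chosen depending only on $\zeta$ (nondecreasingly), and $\lambda$ depending only on $\zeta$ and $\varpi_M$ (nondecreasingly), where $\varpi_M>0$ is a constant such that $\|\Psi^\diamond v\|^2_{\mathrm D(A)}\le\varpi_M\|\Psi^\diamond v\|_V^2$ and $\|\Psi^\diamond v\|_V^2\le\varpi_M\|v\|^2_{\mathbb R^{M_\sigma}}$ for all $v\in\mathbb R^{M_\sigma}$.
   Context: $H$ real Hilbert space identified with its dual, $V\subseteq H$ real Hilbert space. (A1) $A\in\mathcal L(V,V')$ symmetric with $(y,z)\mapsto\langle Ay,z\rangle_{V',V}$ a complete scalar product on $V$; $V$ carries the scalar product $(y,z)_V:=\langle Ay,z\rangle_{V',V}$. (A2) $V\subseteq H$ is dense, continuous, compact. $\mathrm D(A):=\{h\in H\mid Ah\in H\}$ with norm $\|z\|_{\mathrm D(A)}:=\|Az\|_H$; $\mathrm D(A)'$ its dual, pairing $\langle\cdot,\cdot\rangle$. (A4) $\sigma:\mathbb N_+\to\mathbb N_+$ strictly increasing, $M_\sigma:=\sigma(M)$; for each $M$, linearly independent actuators $\mathfrak d^{M,j}\in\mathrm D(A)'$, $1\le j\le M_\sigma$, and linearly independent $\Psi^{M,j}\in\mathrm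 D(A)$, $1\le j\le M_\sigma$, with $\langle\mathfrak d^{M,j},\Psi^{M,i}\rangle=\delta_{ij}$; with $\mathrm D_M:=\{z\in\mathrm D(A)\mid\langle\mathfrak d^{M,j},z\rangle=0\ \forall j\}$, the constant $\xi_{M_+}:=\inf_{\Theta\in\mathrm D_M\setminus\{0\}}\|\Theta\|^2_{\mathrm D(A)}/\|\Theta\|_V^2$ satisfies $\xi_{M_+}\to+\infty$ as $M\to\infty$. Notation: $\mathfrak d(z):=(\langle\mathfrak d^{M,1},z\rangle,\dots,\langle\mathfrak d^{M,M_\sigma},z\rangle)\in\mathbb R^{M_\sigma}$ for $z\in\mathrm D(A)$, and $\Psi^\diamond v:=\sum_{j=1}^{M_\sigma}v_j\Psi^{M,j}$ for $v\in\mathbb R^{M_\sigma}$. *)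

From HB Require Import structures.
From mathcomp Require Import all_boot all_order all_algebra.
From mathcomp Require Import all_classical all_reals all_analysis.
Set Implicit Arguments. Unset Strict Implicit. Unset Printing Implicit Defensive.
Import Order.TTheory GRing.Theory Num.Theory.
Local Open Scope classical_set_scope.
Local Open Scope ring_scope.

Section Defs.
Variables (R : realType) (H : lmodType R).

Definition ipnorm (ip : H -> H -> R) (x : H) : R := Num.sqrt (ip x x).

Definition is_inner_product (ip : H -> H -> R) : Prop :=
  (forall x y, ip x y = ip y x) /\
  (forall (a : R) x y z, ip (a *: x + y) z = a * ip x z + ip y z) /\
  (forall x, x != 0 -> 0 < ip x x).

Definition cauchy_in (ip : H -> H -> R) (u : nat -> H) : Prop :=
  forall e : R, 0 < e -> exists N : nat, forall m n : nat,
    (N <= m)%N -> (N <= n)%N -> ipnorm ip (u m - u n) < e.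

Definition converges_in (ip : H -> H -> R) (u : nat -> H) (l : H) : Prop :=
  forall e : R, 0 < e -> exists N : nat, forall n : nat,
    (N <= n)%N -> ipnorm ip (u n - l) < e.

Definition real_Hilbert (ipH : H -> H -> R) : Prop :=
  is_inner_product ipH /\
  (forall u : nat -> H, cauchy_in ipH u -> exists l, converges_in ipH u l).

(* ---------- (A1): V ⊆ H a linear subspace, (y,z)_V := <Ay,z> a complete
   scalar product on V (aV y z stands for <Ay,z>_{V',V}) ---------- *)
Definition A1 (V : set H) (aV : H -> H -> R) : Prop :=
  [/\ V 0 /\ (forall (a : R) x y, V x -> V y -> V (a *: x + y)),
      (forall x y, V x -> V y -> aV x y = aV y x),
      (forall (a : R) x y z, V x -> V y -> V z ->
          aV (a *: x + y) z = a * aV x z + aV y z),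
      (forall x, V x -> x != 0 -> 0 < aV x x) &
      (forall u : nat -> H, (forall n, V (u n)) -> cauchy_in aV u ->
          exists2 l, V l & converges_in aV u l)].

(* ---------- (A2): V ⊆ H dense, continuous, compact ---------- *)
Definition A2 (ipH : H -> H -> R) (V : set H) (aV : H -> H -> R) : Prop :=
  [/\ (forall h : H, forall e : R, 0 < e -> exists2 v, V v & ipnorm ipH (h - v) < e),
      (exists C : R, forall v, V v -> ipH v v <= C * aV v v) &
      (forall u : nat -> H, (forall n, V (u n)) ->
         (exists B : R, forall n, aV (u n) (u n) <= B) ->
         exists phi : nat -> nat, {homo phi : m n / (m < n)%N} /\
           exists l : H, converges_in ipH (u \o phi) l)].

(* ---------- D(A) = {h in H | Ah in H}, ||z||_{D(A)} = |Az|_H ---------- *)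
Definition inDA (ipH : H -> H -> R) (V : set H) (aV : H -> H -> R) (z : H) : Prop :=
  V z /\ exists f : H, forall y, V y -> aV z y = ipH f y.

(* Az (as an element of H), for z in D(A); unique by density of V in H *)
Definition Aop (ipH : H -> H -> R) (V : set H) (aV : H -> H -> R) (z : H) : H :=
  xget 0 [set f : H | forall y, V y -> aV z y = ipH f y].

Definition normDA2 ipH V aV (z : H) : R :=
  ipH (Aop ipH V aV z) (Aop ipH V aV z).

Definition in_DA_dual ipH V aV (f : H -> R) : Prop :=
  (forall (a : R) x y, inDA ipH V aV x -> inDA ipH V aV y ->
      f (a *: x + y) = a * f x + f y) /\
  exists C : R, forall z, inDA ipH V aV z -> `|f z| <= C * Num.sqrt (normDA2 ipH V aV z).

Definition DM ipH V aV (n : nat) (dM : 'I_n -> H -> R) : set H :=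
  [set z | inDA ipH V aV z /\ forall j, dM j z = 0].

Definition xiM ipH V aV (n : nat) (dM : 'I_n -> H -> R) : \bar R :=
  ereal_inf [set ((normDA2 ipH V aV z / aV z z)%:E)%E
            | z in DM ipH V aV dM `\` [set 0]].

Definition Psid (n : nat) (PsiM : 'I_n -> H) (v : 'I_n -> R) : H :=
  \sum_(j < n) v j *: PsiM j.

Definition dnorm2 (n : nat) (dM : 'I_n -> H -> R) (z : H) : R :=
  \sum_(j < n) (dM j z) ^+ 2.

Definition A4 ipH V aV (sigma : nat -> nat)
    (d : forall M : nat, 'I_(sigma M) -> H -> R)
    (Psi : forall M : nat, 'I_(sigma M) -> H) : Prop :=
  [/\ (forall M, (0 < M)%N -> (0 < sigma M)%N),
      (forall M N, (0 < M)%N -> (M < N)%N -> (sigma M < sigma N)%N),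
      (forall M, (0 < M)%N ->
        [/\ (forall j, in_DA_dual ipH V aV (d M j)),
            (forall c : 'I_(sigma M) -> R,
               (forall z, inDA ipH V aV z -> \sum_(j < sigma M) c j * d M j z = 0) ->
               forall j, c j = 0),
            (forall j, inDA ipH V aV (Psi M j)),
            (forall c : 'I_(sigma M) -> R,
               \sum_(j < sigma M) c j *: Psi M j = 0 -> forall j, c j = 0) &
            (forall i j, d M j (Psi M i) = (i == j)%:R)]) &
      ((fun M => xiM ipH V aV (d M)) @ \oo --> +oo%E)].

Definition varpi_ok ipH V aV (n : nat) (dM : 'I_n -> H -> R) (PsiM : 'I_n -> H)
    (w : R) : Prop :=
  0 < w /\ forall v : 'I_n -> R,
    normDA2 ipH V aV (Psid PsiM v) <= w * aV (Psid PsiM v) (Psid PsiM v) /\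
    aV (Psid PsiM v) (Psid PsiM v) <= w * \sum_(j < n) (v j) ^+ 2.

End Defs.

From HB Require Import structures.
From mathcomp Require Import all_boot all_order all_algebra.
From mathcomp Require Import all_classical all_reals all_analysis.
From mathcomp Require Import ring lra.
Set Implicit Arguments. Unset Strict Implicit. Unset Printing Implicit Defensive.
Import Order.TTheory GRing.Theory Num.Theory.
Local Open Scope classical_set_scope.
Local Open Scope ring_scope.

(* Given zeta, take M so large that xi_{N+} >= 4 zeta for all N >= M (least such M,
   hence nondecreasing in zeta).  For z in D(A) put p := Psi^diamond (d z), which
   has the same actuator values as z, so that z - p lies in D_M.  Then
     zeta |z|_V^2 <= 2 zeta |z - p|_V^2 + 2 zeta |p|_V^2
                  <= |z - p|_D(A)^2 / 2 + 2 zeta |p|_V^2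
                  <= |z|_D(A)^2 + |p|_D(A)^2 + 2 zeta |p|_V^2,
   and |p|_D(A)^2, |p|_V^2 are bounded by multiples of |d z|^2: by varpi_M^2 and
   varpi_M, or, with no varpi_M given, by a crude triangle-inequality bound. *)

Section PosSymForm.
Variables (R : realFieldType) (H : lmodType R).

Definition pos_sym_form (P : set H) (b : H -> H -> R) : Prop :=
  [/\ P 0 /\ (forall (a : R) x y, P x -> P y -> P (a *: x + y)),
      (forall x y, P x -> P y -> b x y = b y x),
      (forall (a : R) x y z, P x -> P y -> P z ->
         b (a *: x + y) z = a * b x z + b y z) &
      (forall x, P x -> x != 0 -> 0 < b x x)].

Variables (P : set H) (b : H -> H -> R).
Hypothesis hb : pos_sym_form P b.

Let P0 : P 0. Proof. by case: hb => -[]. Qed.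
Let P_lin (a : R) x y : P x -> P y -> P (a *: x + y).
Proof. by case: hb => -[_ h] _ _ _; apply: h. Qed.
Let b_sym x y : P x -> P y -> b x y = b y x.
Proof. by case: hb => _ h _ _; apply: h. Qed.
Let b_linl (a : R) x y z : P x -> P y -> P z -> b (a *: x + y) z = a * b x z + b y z.
Proof. by case: hb => _ _ h _; apply: h. Qed.
Let b_pos x : P x -> x != 0 -> 0 < b x x.
Proof. by case: hb => _ _ _ h; apply: h. Qed.

Lemma subspaceD x y : P x -> P y -> P (x + y).
Proof. by move=> Px Py; rewrite -[x]scale1r; apply: P_lin. Qed.

Lemma subspaceZ a x : P x -> P (a *: x).
Proof. by move=> Px; rewrite -[a *: x]addr0; apply: P_lin. Qed.

Lemma subspaceN x : P x -> P (- x).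
Proof. by move=> Px; rewrite -scaleN1r; apply: subspaceZ. Qed.

Lemma subspaceB x y : P x -> P y -> P (x - y).
Proof. by move=> Px Py; apply/subspaceD/subspaceN. Qed.

Lemma subspace_sum n (v : 'I_n -> R) (x : 'I_n -> H) :
  (forall j, P (x j)) -> P (\sum_j v j *: x j).
Proof. by move=> Px; elim/big_rec: _ => // i s _ Ps; apply: P_lin. Qed.

Lemma psform0l z : P z -> b 0 z = 0.
Proof.
move=> Pz; have := b_linl 1 P0 P0 Pz; rewrite scaler0 addr0 mul1r.
lra.
Qed.

Lemma psformDl x y z : P x -> P y -> P z -> b (x + y) z = b x z + b y z.
Proof. by move=> Px Py Pz; have := b_linl 1 Px Py Pz; rewrite scale1r mul1r. Qed.

Lemma psformZl a x z : P x -> P z -> b (a *: x) z = a * b x z.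
Proof. by move=> Px Pz; have := b_linl a Px P0 Pz; rewrite addr0 psform0l // addr0. Qed.

Lemma psformNl x z : P x -> P z -> b (- x) z = - b x z.
Proof. by move=> Px Pz; rewrite -scaleN1r psformZl // mulN1r. Qed.

Lemma psformDr x y z : P x -> P y -> P z -> b z (x + y) = b z x + b z y.
Proof.
move=> Px Py Pz; have Pxy := subspaceD Px Py.
by rewrite b_sym // psformDl // (b_sym Px Pz) (b_sym Py Pz).
Qed.

Lemma psformZr a x z : P x -> P z -> b z (a *: x) = a * b z x.
Proof.
by move=> Px Pz; have Pax := subspaceZ a Px; rewrite b_sym // psformZl // (b_sym Px Pz).
Qed.

Lemma psformNr x z : P x -> P z -> b z (- x) = - b z x.
Proof. by move=> Px Pz; rewrite -scaleN1r psformZr // mulN1r. Qed.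

Lemma psform_ge0 x : P x -> 0 <= b x x.
Proof.
move=> Px; have [->|x0] := eqVneq x 0; first by rewrite psform0l.
exact/ltW/b_pos.
Qed.

Lemma psformZZ a x : P x -> b (a *: x) (a *: x) = a ^+ 2 * b x x.
Proof.
by move=> Px; have Pax := subspaceZ a Px; rewrite psformZl // psformZr // mulrA expr2.
Qed.

Lemma psformDD_le x y : P x -> P y -> b (x + y) (x + y) <= 2 * b x x + 2 * b y y.
Proof.
move=> Px Py; have Pny := subspaceN Py.
have expand u : P u -> b (x + u) (x + u) = b x x + 2 * b x u + b u u.
  move=> Pu; have Pxu := subspaceD Px Pu.
  rewrite psformDl // !psformDr // (b_sym Pu Px); ring.
have := psform_ge0 (subspaceB Px Py).
rewrite !expand // psformNr // psformNl // psformNr // opprK.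
lra.
Qed.

(* Cauchy-Schwarz with a wasteful constant, which is all that is needed. *)
Lemma psform_sum_le n (v : 'I_n -> R) (x : 'I_n -> H) : (forall j, P (x j)) ->
  b (\sum_j v j *: x j) (\sum_j v j *: x j) <=
  2 ^+ n * ((\sum_j v j ^+ 2) * (\sum_j b (x j) (x j))).
Proof.
elim: n v x => [|n IH] v x Px; first by rewrite !big_ord0 psform0l // mul0r mulr0.
rewrite !big_ord_recr /= exprS.
set S := \sum_(i < n) _; set A := \sum_(i < n) _; set B := \sum_(i < n) _.
have PS : P S by apply: subspace_sum.
have := psformDD_le PS (subspaceZ (v ord_max) (Px ord_max)).
rewrite psformZZ //.
have hS : b S S <= 2 ^+ n * (A * B) by apply: IH.
have hA : 0 <= A by apply: sumr_ge0 => i _; apply: sqr_ge0.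
have hB : 0 <= B by apply: sumr_ge0 => i _; apply: psform_ge0.
have hc : 1 <= 2 ^+ n :> R by apply: exprn_ege1; lra.
have hq := psform_ge0 (Px ord_max); have hw := sqr_ge0 (v ord_max).
set c := 2 ^+ n in hS hc *.
set q := b (x ord_max) (x ord_max) in hq *; set w := v ord_max ^+ 2 in hw *.
have hAq : 0 <= A * q by apply: mulr_ge0.
have hwB : 0 <= w * B by apply: mulr_ge0.
have hwq : 0 <= w * q by apply: mulr_ge0.
have : 2 * w * q <= 2 * c * (w * q) by nra.
have : 0 <= 2 * c * (A * q + w * B) by nra.
nra.
Qed.

End PosSymForm.

Lemma A1_pos_sym_form (R : realType) (H : lmodType R) (V : set H) (aV : H -> H -> R) :
  A1 V aV -> pos_sym_form V aV.
Proof. by case. Qed.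

Section DomainOperator.
Variables (R : realType) (H : lmodType R) (ipH : H -> H -> R).
Variables (V : set H) (aV : H -> H -> R).
Hypothesis ipH_inner : is_inner_product ipH.
Hypothesis aV_form : pos_sym_form V aV.
Hypothesis V_dense :
  forall (h : H) (e : R), 0 < e -> exists2 v, V v & ipnorm ipH (h - v) < e.

Local Notation DA := (inDA ipH V aV).
Local Notation A := (Aop ipH V aV).

Let ipH_form : pos_sym_form [set: H] ipH.
Proof.
case: ipH_inner => sym [lin pos].
by split=> [|x y _ _|a x y z _ _ _|x _]; [|exact: sym|exact: lin|exact: pos].
Qed.

Let ip0l z : ipH 0 z = 0 := psform0l ipH_form I.
Let ipDl x y z : ipH (x + y) z = ipH x z + ipH y z := psformDl ipH_form I I I.
Let ipDr x y z : ipH z (x + y) = ipH z x + ipH z y := psformDr ipH_form I I I.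
Let ipZl a x z : ipH (a *: x) z = a * ipH x z := psformZl ipH_form a I I.
Let ipNl x z : ipH (- x) z = - ipH x z := psformNl ipH_form I I.
Let ipNr x z : ipH z (- x) = - ipH z x := psformNr ipH_form I I.

Lemma orthogonal_dense_eq0 g : (forall y, V y -> ipH g y = 0) -> g = 0.
Proof.
move=> g_orth; apply/eqP/negPn/negP => g_neq0.
have gg_gt0 : 0 < ipH g g by case: ipH_inner => _ [_]; apply.
have e_gt0 : 0 < Num.sqrt (ipH g g / 2) by rewrite sqrtr_gt0 divr_gt0.
have [v Vv] := V_dense g e_gt0; have g_orth_v := g_orth v Vv.
rewrite /ipnorm ltr_sqrt ?divr_gt0 //.
rewrite ipDl !ipDr !ipNl !ipNr opprK (proj1 ipH_inner v g) g_orth_v.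
have := psform_ge0 ipH_form (I : [set: H] v).
lra.
Qed.

Lemma Aop_spec z : DA z -> forall y, V y -> aV z y = ipH (A z) y.
Proof.
case=> _ [f f_spec].
exact: (xgetI 0 (P := [set f : H | forall y, V y -> aV z y = ipH f y]) f_spec).
Qed.

Lemma Aop_unique z f : DA z -> (forall y, V y -> aV z y = ipH f y) -> A z = f.
Proof.
move=> DAz f_spec; apply/eqP; rewrite -subr_eq0; apply/eqP.
by apply: orthogonal_dense_eq0 => y Vy; rewrite ipDl ipNl -Aop_spec // -f_spec // subrr.
Qed.

Lemma inDA_Aop_lin a x y : DA x -> DA y ->
  DA (a *: x + y) /\ A (a *: x + y) = a *: A x + A y.
Proof.
move=> DAx DAy; have [Vx Vy] := (proj1 DAx, proj1 DAy).
have A_spec w : V w -> aV (a *: x + y) w = ipH (a *: A x + A y) w.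
  by move=> Vw; case: aV_form => _ _ lin _; rewrite lin // ipDl ipZl -!Aop_spec.
have DAaxy : DA (a *: x + y).
  by split; [exact: (subspaceD aV_form (subspaceZ aV_form a Vx) Vy) | exists (a *: A x + A y)].
by split; last exact: Aop_unique.
Qed.

Lemma inDA0 : DA 0.
Proof.
have V0 : V 0 by case: aV_form => -[].
by split=> //; exists 0 => y Vy; rewrite ip0l (psform0l aV_form).
Qed.

Lemma Aop0 : A 0 = 0.
Proof.
apply: Aop_unique; first exact: inDA0.
by move=> y Vy; rewrite ip0l (psform0l aV_form).
Qed.

Lemma normDA2_ge0 z : 0 <= normDA2 ipH V aV z.
Proof. exact: (psform_ge0 ipH_form (I : [set: H] (A z))). Qed.

Lemma normDA2B_le x y : DA x -> DA y ->
  normDA2 ipH V aV (x - y) <= 2 * normDA2 ipH V aV x + 2 * normDA2 ipH V aV y.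
Proof.
move=> DAx DAy; rewrite /normDA2 -[x - y]addrC -scaleN1r.
rewrite (proj2 (inDA_Aop_lin _ DAy DAx)) scaleN1r addrC.
have := psformDD_le ipH_form (I : [set: H] (A x)) (I : [set: H] (- A y)).
by rewrite ipNl ipNr opprK.
Qed.

Lemma inDA_Aop_sum n (c : 'I_n -> R) (x : 'I_n -> H) : (forall j, DA (x j)) ->
  DA (\sum_j c j *: x j) /\ A (\sum_j c j *: x j) = \sum_j c j *: A (x j).
Proof.
move=> DAx; apply: (big_rec2 (fun s t => DA s /\ A s = t)).
  by split; [exact: inDA0 | exact: Aop0].
move=> i s t _ [DAs <-]; exact: inDA_Aop_lin.
Qed.

Lemma DA_dual_sum n (f : H -> R) (c : 'I_n -> R) (x : 'I_n -> H) :
  in_DA_dual ipH V aV f -> (forall j, DA (x j)) ->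
  f (\sum_j c j *: x j) = \sum_j c j * f (x j).
Proof.
move=> [f_lin _] DAx.
suff [] : DA (\sum_j c j *: x j) /\ f (\sum_j c j *: x j) = \sum_j c j * f (x j) by [].
apply: (big_rec2 (fun s t => DA s /\ f s = t)).
  split; first exact: inDA0.
  by have := f_lin 1 0 0 inDA0 inDA0; rewrite scaler0 addr0 mul1r; lra.
move=> i s t _ [DAs <-]; split; first exact: (proj1 (inDA_Aop_lin _ (DAx i) DAs)).
exact: f_lin.
Qed.

Lemma le_normDA2_xiM n (dM : 'I_n -> H -> R) (c : R) :
  (c%:E <= xiM ipH V aV dM)%E ->
  forall th, DM ipH V aV dM th -> c * aV th th <= normDA2 ipH V aV th.
Proof.
move=> c_le th DMth; have Vth : V th := proj1 (proj1 DMth).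
have [->|th_neq0] := eqVneq th 0.
  by rewrite (psform0l aV_form) ?mulr0 ?normDA2_ge0 //; case: aV_form => -[].
have th_gt0 : 0 < aV th th by case: aV_form => _ _ _; apply.
rewrite -ler_pdivlMr // -lee_fin; apply: le_trans c_le _; apply: ereal_inf_lbound.
by exists th => //; split=> //; apply/eqP.
Qed.

Definition Psid_bound n (PsiM : 'I_n -> H) (C1 C2 : R) : Prop :=
  forall v, normDA2 ipH V aV (Psid PsiM v) <= C1 * \sum_j v j ^+ 2 /\
            aV (Psid PsiM v) (Psid PsiM v) <= C2 * \sum_j v j ^+ 2.

Lemma varpi_ok_Psid_bound n (dM : 'I_n -> H -> R) (PsiM : 'I_n -> H) (w : R) :
  varpi_ok ipH V aV dM PsiM w -> Psid_bound PsiM (w * w) w.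
Proof.
move=> [w_gt0 w_bound] v; have [N_le A_le] := w_bound v; split=> //.
by rewrite -mulrA; apply: le_trans N_le _; rewrite ler_pM2l.
Qed.

Section Coordinates.
Variables (n : nat) (dM : 'I_n -> H -> R) (PsiM : 'I_n -> H).
Hypothesis dM_dual : forall j, in_DA_dual ipH V aV (dM j).
Hypothesis PsiM_DA : forall j, DA (PsiM j).
Hypothesis dM_PsiM : forall i j, dM j (PsiM i) = (i == j)%:R.

Lemma dM_Psid v j : dM j (Psid PsiM v) = v j.
Proof.
rewrite /Psid DA_dual_sum // (bigD1 j) //= dM_PsiM eqxx mulr1.
by rewrite big1 ?addr0 // => i /negbTE i_neq_j; rewrite dM_PsiM i_neq_j mulr0.
Qed.

Lemma Psid_bounded : exists2 C, 0 < C & Psid_bound PsiM C C.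
Proof.
pose SN := \sum_j normDA2 ipH V aV (PsiM j).
pose SA := \sum_j aV (PsiM j) (PsiM j).
have SN_ge0 : 0 <= SN by apply: sumr_ge0 => j _; apply: normDA2_ge0.
have SA_ge0 : 0 <= SA.
  by apply: sumr_ge0 => j _; apply: (psform_ge0 aV_form (proj1 (PsiM_DA j))).
have c_ge1 : 1 <= 2 ^+ n :> R by apply: exprn_ege1; lra.
set c := 2 ^+ n in c_ge1.
have cS_ge0 : 0 <= c * (SN + SA) by apply: mulr_ge0; lra.
exists (c * (SN + SA) + 1) => [|v]; first lra.
have S_ge0 : 0 <= \sum_j v j ^+ 2 by apply: sumr_ge0 => j _; apply: sqr_ge0.
have NP_le : normDA2 ipH V aV (Psid PsiM v) <= c * ((\sum_j v j ^+ 2) * SN).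
  rewrite /normDA2 /Psid (proj2 (inDA_Aop_sum _ PsiM_DA)).
  exact: (psform_sum_le ipH_form v (fun j => I : [set: H] (A (PsiM j)))).
have AP_le : aV (Psid PsiM v) (Psid PsiM v) <= c * ((\sum_j v j ^+ 2) * SA).
  exact: (psform_sum_le aV_form v (fun j => proj1 (PsiM_DA j))).
set S := \sum_j v j ^+ 2 in S_ge0 NP_le AP_le *.
have cSSA_ge0 : 0 <= c * (S * SA) by apply: mulr_ge0; [lra | apply: mulr_ge0].
have cSSN_ge0 : 0 <= c * (S * SN) by apply: mulr_ge0; [lra | apply: mulr_ge0].
split; nra.
Qed.

Lemma aV_le_normDA2_dnorm2 (zeta C1 C2 lambda : R) :
  0 < zeta -> ((4 * zeta)%:E <= xiM ipH V aV dM)%E ->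
  Psid_bound PsiM C1 C2 -> C1 + 2 * zeta * C2 <= 2 * lambda ->
  forall z, DA z -> zeta * aV z z <= normDA2 ipH V aV z + 2 * lambda * dnorm2 dM z.
Proof.
move=> zeta_gt0 xi_ge Psid_le lambda_ge z DAz.
pose p := Psid PsiM (fun j => dM j z).
have DAp : DA p by exact: (proj1 (inDA_Aop_sum _ PsiM_DA)).
have DMth : DM ipH V aV dM (z - p).
  rewrite -[z - p]addrC -scaleN1r; split; first exact: (proj1 (inDA_Aop_lin _ DAp DAz)).
  by move=> j; rewrite (proj1 (dM_dual j)) // dM_Psid // mulN1r addNr.
have [Vp Vth] : V p /\ V (z - p) by split; [case: DAp | case: DMth => -[]].
have z_split : aV z z <= 2 * aV (z - p) (z - p) + 2 * aV p p.
  by have := psformDD_le aV_form Vth Vp; rewrite subrK.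
have th_le := le_normDA2_xiM xi_ge DMth.
have thDA_le := normDA2B_le DAz DAp.
have [p_DA_le p_V_le] : normDA2 ipH V aV p <= C1 * dnorm2 dM z /\
                        aV p p <= C2 * dnorm2 dM z := Psid_le _.
have D_ge0 : 0 <= dnorm2 dM z by apply: sumr_ge0 => j _; apply: sqr_ge0.
have := ler_wpM2r D_ge0 lambda_ge.
have := ler_wpM2l (ltW zeta_gt0) z_split.
have := ler_wpM2l (ltW zeta_gt0) p_V_le.
nra.
Qed.

End Coordinates.

End DomainOperator.

Section XiIndex.
Variables (R : realType) (H : lmodType R) (ipH : H -> H -> R).
Variables (V : set H) (aV : H -> H -> R).
Variables (sigma : nat -> nat) (d : forall M : nat, 'I_(sigma M) -> H -> R).
Hypothesis xi_cvg : (fun M : nat => xiM ipH V aV (@d M)) @ \oo --> +oo%E.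

Definition xi_ge_from (c : R) (M : nat) : Prop :=
  (0 < M)%N /\ forall N, (M <= N)%N -> (c%:E <= xiM ipH V aV (@d N))%E.

Lemma xi_ge_from_exists c : exists M, `[< xi_ge_from c M >].
Proof.
have [N _ N_ge] := cvgey_ge xi_cvg c.
exists N.+1; apply/asboolP; split=> // N' N_lt; apply: N_ge.
by rewrite /= ltnW.
Qed.

Definition xi_index (c : R) : nat := ex_minn (xi_ge_from_exists c).

Lemma xi_indexP c : xi_ge_from c (xi_index c).
Proof. by rewrite /xi_index; case: ex_minnP => M /asboolP. Qed.

Lemma xi_index_le c1 c2 : c1 <= c2 -> (xi_index c1 <= xi_index c2)%N.
Proof.
move=> c12; rewrite /xi_index; case: ex_minnP => M _; apply; apply/asboolP.
have [M_gt0 M_ge] := xi_indexP c2; split=> // N /M_ge; apply: le_trans.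
by rewrite lee_fin.
Qed.

End XiIndex.

Theorem lemma3p4 (R : realType) (H : lmodType R) (ipH : H -> H -> R)
    (V : set H) (aV : H -> H -> R) (sigma : nat -> nat)
    (d : forall M : nat, 'I_(sigma M) -> H -> R)
    (Psi : forall M : nat, 'I_(sigma M) -> H) :
  real_Hilbert ipH -> A1 V aV -> A2 ipH V aV -> A4 ipH V aV d Psi ->
  (forall zeta : R, 0 < zeta ->
     exists M : nat, (0 < M)%N /\ exists2 lambda : R, 0 < lambda &
       forall z : H, inDA ipH V aV z ->
         normDA2 ipH V aV z + 2 * lambda * dnorm2 (d M) z >= zeta * aV z z)
  /\
  (exists (Mf : R -> nat) (Lf : R -> R -> R),
     [/\ (forall zeta, 0 < zeta -> (0 < Mf zeta)%N),
         (forall z1 z2, 0 < z1 -> z1 <= z2 -> (Mf z1 <= Mf z2)%N),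
         (forall z1 z2 w1 w2, 0 < z1 -> z1 <= z2 -> 0 < w1 -> w1 <= w2 ->
            Lf z1 w1 <= Lf z2 w2) &
         forall zeta w, 0 < zeta ->
           varpi_ok ipH V aV (d (Mf zeta)) (Psi (Mf zeta)) w ->
           0 < Lf zeta w /\
           forall z : H, inDA ipH V aV z ->
             normDA2 ipH V aV z + 2 * Lf zeta w * dnorm2 (d (Mf zeta)) z
               >= zeta * aV z z]).
Proof.
move=> [ipH_inner _] /A1_pos_sym_form aV_form [V_dense _ _] [_ _ d_Psi xi_cvg].
pose Mf zeta := xi_index xi_cvg (4 * zeta).
have Mf_gt0 zeta : (0 < Mf zeta)%N by case: (xi_indexP xi_cvg (4 * zeta)).
have coercive zeta C1 C2 lambda : 0 < zeta ->
    Psid_bound ipH V aV (Psi (Mf zeta)) C1 C2 -> C1 + 2 * zeta * C2 <= 2 * lambda ->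
    forall z, inDA ipH V aV z ->
    normDA2 ipH V aV z + 2 * lambda * dnorm2 (d (Mf zeta)) z >= zeta * aV z z.
  have [d_dual _ Psi_DA _ d_Psi_id] := d_Psi _ (Mf_gt0 zeta).
  move=> zeta_gt0; apply: aV_le_normDA2_dnorm2 => //.
  exact: (proj2 (xi_indexP xi_cvg (4 * zeta)) _ (leqnn _)).
split=> [zeta zeta_gt0|].
  have [_ _ Psi_DA _ _] := d_Psi _ (Mf_gt0 zeta).
  have [C C_gt0 C_bound] := Psid_bounded ipH_inner aV_form V_dense Psi_DA.
  exists (Mf zeta); split=> //; exists ((C + 2 * zeta * C) / 2).
    by have := mulr_gt0 zeta_gt0 C_gt0; lra.
  by apply: (coercive _ C C) => //; lra.
exists Mf, (fun zeta w => (w * w + 2 * zeta * w) / 2); split=> //.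
- by move=> z1 z2 _ z12; apply: xi_index_le; lra.
- move=> z1 z2 w1 w2 z1_gt0 z12 w1_gt0 w12.
  have := ler_pM (ltW w1_gt0) (ltW w1_gt0) w12 w12.
  have := ler_pM (ltW z1_gt0) (ltW w1_gt0) z12 w12.
  lra.
- move=> zeta w zeta_gt0 w_ok; have w_gt0 := w_ok.1; split.
    by have := mulr_gt0 w_gt0 w_gt0; have := mulr_gt0 zeta_gt0 w_gt0; lra.
  by apply: (coercive _ (w * w) w) => //; [exact: varpi_ok_Psid_bound w_ok | lra].
Qed.
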